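(* Let $\pi\in\Pi$, $\alpha<\beta$ and $\delta>0$ with $d_\Xi(\Xi^\pi(\alpha),\Xi^\pi(\beta))\le\delta$, and let $\theta=d_k(\pi(\alpha),\pi(\beta))$ (so $\theta\le\delta$). Let $\tilde\pi\in\Pi$ be any strategy that coincides with $\pi$ on $[0,\beta]$ and on $[\beta,\beta+\theta]$ performs the canonical transition from $\pi(\beta)$ to $\pi(\alpha)$: each robot $r$ moves at unit speed along a fixed shortest path from $\pi_r(\beta)$ to $\pi_r(\alpha)$ and then waits there until time $\beta+\theta$. Then, with $\Gamma=[\alpha,\beta+\theta]$, $$\tilde\pi_r(\beta+\theta)=\pi_r(\alpha)\ \ \forall r,\qquad \sup_{t\in\Gamma}M^{\tilde\pi}(t)\le\sup_{t\in[\alpha,\beta]}M^\pi(t)+\phi_{\max}\delta.$$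
   Context: Let $G=(V,E,A,\phi)$ be a finite connected undirected graph with node set $V$, edge set $E$, edge lengths $A:E\to\mathbb{R}_{>0}$, node weights $\phi:V\to\mathbb{R}_{>0}$, $\phi_{\max}=\max_v\phi(v)$; $|G|$ its metric graph with shortest-path metric $d$. Fix $k\ge1$ robots; $d_k(p,p')=\max_i d(p_i,p'_i)$; $\Pi=\{\pi\in C([0,\infty),|G|^k): d_k(\pi(t),\pi(t'))\le|t-t'|\}$. For $v\in V$, $t\ge0$: $\tau^\pi(v,t)=\sup\{t'\le t:\pi_r(t')=v\text{ for some }r\}$ if nonempty, else $0$; $L^\pi_v(t)=t-\tau^\pi(v,t)$; $M^\pi(t)=\max_v\phi(v)L^\pi_v(t)$. Joint state $\Xi^\pi(t)=(\pi(t),(L^\pi_v(t))_{v\in V})$ with metric $d_\Xi((p,L),(p',L'))=\max\{d_k(p,p'),\max_v|L_v-L'_v|\}$. *)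

From HB Require Import structures.
From mathcomp Require Import all_boot all_order all_algebra.
From mathcomp Require Export boolp classical_sets reals set_interval.
Set Implicit Arguments. Unset Strict Implicit. Unset Printing Implicit Defensive.
Import Order.TTheory GRing.Theory Num.Theory.
Local Open Scope ring_scope.
Local Open Scope classical_set_scope.

(* Points of the metric graph |G|: a node, or an interior point of an edge e at
   distance s from the first endpoint (ends e).1 (valid iff 0 < s < A e).
   With this normal form, equality of points is Leibniz equality. *)
Inductive mpoint (R V E : Type) := PV of V | PE of E & R.
Arguments PV {R V E}.
Arguments PE {R V E}.

Section MetricGraph.
Context {R : realType} {V E : finType}.
Variables (ends : E -> V * V) (A : E -> R).

Definition valid_point (p : mpoint R V E) : Prop :=
  match p with PV _ => True | PE e s => 0 < s < A e end.

(* a walk from u to w: a list of oriented edges (true = traversed from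
   (ends e).1 to (ends e).2) *)
Fixpoint walk_ok (u w : V) (s : seq (E * bool)) : Prop :=
  match s with
  | [::] => u = w
  | (e, b) :: s' =>
      (if b then (ends e).1 else (ends e).2) = u /\
      walk_ok (if b then (ends e).2 else (ends e).1) w s'
  end.

Definition walk_length (s : seq (E * bool)) : R := \sum_(x <- s) A x.1.

Definition connected_graph : Prop := forall u w : V, exists s, walk_ok u w s.

Definition node_dist (u w : V) : R :=
  inf [set l | exists s, walk_ok u w s /\ l = walk_length s].

(* the nodes through which a point can be left, with the corresponding offsets *)
Definition attach (p : mpoint R V E) : seq (V * R) :=
  match p with
  | PV v => [:: (v, 0)]
  | PE e s => [:: ((ends e).1, s); ((ends e).2, A e - s)]
  end.

Definition mdist (p q : mpoint R V E) : R :=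
  inf [set x | (exists e s s', p = PE e s /\ q = PE e s' /\ x = `|s - s'|) \/
               (exists a b, a \in attach p /\ b \in attach q /\
                            x = a.2 + node_dist a.1 b.1 + b.2)].

Definition dk (k : nat) (p p' : 'I_k -> mpoint R V E) : R :=
  \big[Num.max/0]_(i < k) mdist (p i) (p' i).

(* the class Pi: maps [0,oo) -> |G|^k, 1-Lipschitz for d_k (values for t < 0
   are irrelevant) *)
Definition is_strategy (k : nat) (pi : R -> 'I_k -> mpoint R V E) : Prop :=
  (forall t (r : 'I_k), 0 <= t -> valid_point (pi t r)) /\
  (forall t t', 0 <= t -> 0 <= t' -> dk (pi t) (pi t') <= `|t - t'|).

Definition last_visit (k : nat) (pi : R -> 'I_k -> mpoint R V E) (v : V) (t : R) : R :=
  let S := [set t' | 0 <= t' <= t /\ exists r, pi t' r = PV v] in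
  if `[< S !=set0 >] then sup S else 0.

Definition latency (k : nat) (pi : R -> 'I_k -> mpoint R V E) (v : V) (t : R) : R :=
  t - last_visit pi v t.

Definition Mcost (phi : V -> R) (k : nat) (pi : R -> 'I_k -> mpoint R V E) (t : R) : R :=
  \big[Num.max/0]_(v : V) (phi v * latency pi v t).

Definition dXi (k : nat) (pi : R -> 'I_k -> mpoint R V E) (a b : R) : R :=
  Num.max (dk (pi a) (pi b))
          (\big[Num.max/0]_(v : V) `|latency pi v a - latency pi v b|).

End MetricGraph.

Definition phimax {R : realType} {V : finType} (phi : V -> R) : R :=
  \big[Num.max/0]_(v : V) phi v.

(* Until time beta the two strategies coincide, so their costs agree there.
   Afterwards every latency grows at rate at most one, hence M^pit grows at
   rate at most phimax; the transition lasts theta <= d_Xi <= delta. *)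
From HB Require Import structures.
From mathcomp Require Import all_boot all_order all_algebra.
From mathcomp Require Import boolp classical_sets reals set_interval.
From mathcomp Require Import ring lra.
Import Order.TTheory GRing.Theory Num.Theory.
Local Open Scope ring_scope.
Local Open Scope classical_set_scope.

Section MetricGraphDistance.
Context {R : realType} {V E : finType}.
Variables (ends : E -> V * V) (A : E -> R).

Lemma walk_ok_cat u m w s1 s2 : walk_ok ends u m s1 -> walk_ok ends m w s2 ->
  walk_ok ends u w (s1 ++ s2).
Proof.
elim: s1 u => [|[e b] s1 IH] u /=; first by move=> ->.
by move=> [Hu Hs1] Hs2; split => //; exact: IH Hs1 Hs2.
Qed.

Definition rev_walk (s : seq (E * bool)) : seq (E * bool) :=
  rev (map (fun x => (x.1, ~~ x.2)) s).

Lemma walk_ok_rev u w s : walk_ok ends u w s -> walk_ok ends w u (rev_walk s).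
Proof.
elim: s u => [|[e b] s IH] u /=; first by move=> ->.
move=> [Hu Hs]; rewrite /rev_walk map_cons rev_cons -cats1.
apply: walk_ok_cat (IH _ Hs) _.
by case: b Hu Hs => /= Hu Hs; split.
Qed.

Lemma walk_length_rev s : walk_length A (rev_walk s) = walk_length A s.
Proof. by rewrite /walk_length /rev_walk big_rev big_map. Qed.

Lemma node_distC u w : node_dist ends A u w = node_dist ends A w u.
Proof.
rewrite /node_dist; congr inf; apply/seteqP; split => l [s [Hs ->]];
  exists (rev_walk s); rewrite walk_length_rev; split => //; exact: walk_ok_rev.
Qed.

Lemma mdistC p q : mdist ends A p q = mdist ends A q p.
Proof.
rewrite /mdist; congr inf; apply/seteqP;
  split => x [[e [s [s' [-> [-> ->]]]]]|[a [b [Ha [Hb ->]]]]].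
- by left; exists e, s', s; rewrite distrC.
- by right; exists b, a; do 2!split => //; rewrite (node_distC b.1 a.1); ring.
- by left; exists e, s', s; rewrite distrC.
- by right; exists b, a; do 2!split => //; rewrite (node_distC b.1 a.1); ring.
Qed.

Lemma mdist_le_dk (k : nat) (p q : 'I_k -> mpoint R V E) (r : 'I_k) :
  mdist ends A (p r) (q r) <= dk ends A p q.
Proof. exact: (le_bigmax _ (fun i => mdist ends A (p i) (q i))). Qed.

Lemma dk_ge0 (k : nat) (p q : 'I_k -> mpoint R V E) : 0 <= dk ends A p q.
Proof. exact: bigmax_ge_id. Qed.

Lemma dk_le_dXi (k : nat) (pi : R -> 'I_k -> mpoint R V E) a b :
  dk ends A (pi a) (pi b) <= dXi ends A pi a b.
Proof. by rewrite /dXi le_max lexx. Qed.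

End MetricGraphDistance.

Section Latency.
Context {R : realType} {V E : finType} {k : nat}.
Implicit Types p q : R -> 'I_k -> mpoint R V E.

Lemma last_visit_ge0 p v t : 0 <= last_visit p v t.
Proof.
rewrite /last_visit; case: asboolP => // [[x Hx]].
have Hx0 : 0 <= x by case: Hx => /andP[].
apply: le_trans Hx0 _; apply: ub_le_sup => //.
by exists t => y [/andP[_ ?] _].
Qed.

Lemma le_last_visit p v t t' : t <= t' -> last_visit p v t <= last_visit p v t'.
Proof.
move=> Htt'; rewrite {1}/last_visit; case: asboolP => [Hne|_];
  last exact: last_visit_ge0.
have visited_by_t' y : (0 <= y <= t) /\ (exists r, p y r = PV v) ->
    (0 <= y <= t') /\ (exists r, p y r = PV v).
  by move=> [/andP[H0 Hy] Hr]; rewrite H0 (le_trans Hy Htt').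
rewrite /last_visit; case: asboolP => [Hne'|Hn]; last first.
  by case: Hne => y /visited_by_t' Hy; exfalso; apply: Hn; exists y.
apply: ge_sup => // y /visited_by_t' Hy; apply: ub_le_sup => //.
by exists t' => z [/andP[_ ?] _].
Qed.

Lemma last_visit_ext p q v t : (forall t', 0 <= t' <= t -> p t' = q t') ->
  last_visit p v t = last_visit q v t.
Proof.
move=> Hpq; rewrite /last_visit.
suff -> : [set t' | 0 <= t' <= t /\ exists r, p t' r = PV v] =
          [set t' | 0 <= t' <= t /\ exists r, q t' r = PV v] by [].
apply/seteqP; split => x [Hx [r Hr]]; split => //; exists r.
  by rewrite -(Hpq x Hx).
by rewrite (Hpq x Hx).
Qed.

Variable phi : V -> R.
Hypothesis phi_ge0 : forall v, 0 <= phi v.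

Lemma phimax_ge0 : 0 <= phimax phi.
Proof. exact: bigmax_ge_id. Qed.

Lemma Mcost_ge0 p t : 0 <= Mcost phi p t.
Proof. exact: bigmax_ge_id. Qed.

Lemma Mcost_ext p q t : (forall t', 0 <= t' <= t -> p t' = q t') ->
  Mcost phi p t = Mcost phi q t.
Proof.
by move=> Hpq; apply: eq_bigr => v _; rewrite /latency (last_visit_ext _ _ v _ Hpq).
Qed.

Lemma Mcost_le_time p t : 0 <= t -> Mcost phi p t <= phimax phi * t.
Proof.
move=> Ht; apply: bigmax_le => [|v _]; first exact: mulr_ge0 phimax_ge0 Ht.
rewrite /latency; apply: le_trans (ler_wpM2r Ht (le_bigmax _ phi v)).
by rewrite ler_wpM2l // gerBl last_visit_ge0.
Qed.

(* Last visit times never decrease, so every latency grows at most like time. *)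
Lemma Mcost_increment_le p t t' : t <= t' ->
  Mcost phi p t' <= Mcost phi p t + phimax phi * (t' - t).
Proof.
move=> Htt'; have Hgap : 0 <= t' - t by rewrite subr_ge0.
apply: bigmax_le => [|v _].
  by rewrite addr_ge0 ?Mcost_ge0 // mulr_ge0 ?phimax_ge0.
have Hlat : phi v * latency p v t <= Mcost phi p t.
  exact: (le_bigmax _ (fun v => phi v * latency p v t)).
have Hphi : phi v * (t' - t) <= phimax phi * (t' - t).
  by rewrite ler_wpM2r //; exact: le_bigmax.
have Hmono : phi v * latency p v t' <= phi v * latency p v t + phi v * (t' - t).
  rewrite -mulrDr ler_wpM2l // /latency.
  have := le_last_visit p v _ _ Htt'; lra.
lra.
Qed.

Lemma Mcost_le_sup p a b t : 0 <= a -> a <= t <= b ->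
  Mcost phi p t <= sup [set Mcost phi p s | s in `[a, b]].
Proof.
move=> Ha Ht; apply: ub_le_sup; last by exists t; rewrite //= in_itv.
exists (phimax phi * b) => y [s]; rewrite /= in_itv /= => /andP[Has Hsb] <-.
apply: le_trans (Mcost_le_time p _ (le_trans Ha Has)) _.
by rewrite ler_wpM2l // phimax_ge0.
Qed.

End Latency.

Theorem mainTheorem13 (R : realType) (V E : finType)
  (ends : E -> V * V) (A : E -> R) (phi : V -> R) (k : nat)
  (HA : forall e, 0 < A e) (Hphi : forall v, 0 < phi v)
  (Hconn : connected_graph ends) (Hk : (1 <= k)%N)
  (pi pit : R -> 'I_k -> mpoint R V E) (alpha beta delta : R)
  (Hpi : is_strategy ends A pi)
  (Halpha : 0 <= alpha) (Hab : alpha < beta) (Hdelta : 0 < delta)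
  (HXi : dXi ends A pi alpha beta <= delta)
  (Hpit : is_strategy ends A pit)
  (Hcoin : forall t : R, 0 <= t <= beta -> pit t = pi t)
  (Htrans : forall r : 'I_k,
     let Dr := mdist ends A (pi beta r) (pi alpha r) in
     (forall t t', beta <= t <= beta + Dr -> beta <= t' <= beta + Dr ->
        mdist ends A (pit t r) (pit t' r) = `|t - t'|) /\
     (forall t : R, beta + Dr <= t <= beta + dk ends A (pi alpha) (pi beta) ->
        pit t r = pi alpha r)) :
  let theta := dk ends A (pi alpha) (pi beta) in
  (forall r : 'I_k, pit (beta + theta) r = pi alpha r) /\
  sup [set Mcost phi pit t | t in `[alpha, beta + theta]] <=
    sup [set Mcost phi pi t | t in `[alpha, beta]] + phimax phi * delta.
Proof.
move=> theta; have phi_ge0 v : 0 <= phi v by exact: ltW.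
have theta_ge0 : 0 <= theta by exact: dk_ge0.
have theta_le : theta <= delta by apply: le_trans HXi; exact: dk_le_dXi.
split=> [r|].
  apply: (Htrans r).2; rewrite lexx andbT lerD2l mdistC; exact: mdist_le_dk.
set S := sup [set Mcost phi pi t | t in `[alpha, beta]].
have cost_before t : alpha <= t <= beta -> Mcost phi pit t <= S.
  move=> /andP[Hat Htb]; rewrite (Mcost_ext phi pit pi t); last first.
    by move=> s /andP[Hs0 Hst]; apply: Hcoin; rewrite Hs0 (le_trans Hst Htb).
  by apply: Mcost_le_sup => //; rewrite Hat Htb.
have phid_ge0 : 0 <= phimax phi * delta by rewrite mulr_ge0 ?phimax_ge0 ?ltW.
apply: ge_sup; first by exists (Mcost phi pit alpha), alpha; rewrite //= in_itv /=; lra.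
move=> y [t]; rewrite /= in_itv /= => /andP[Hat Htb] <-.
have [Htbeta|Hbetat] := lerP t beta.
  by have := cost_before t; rewrite Hat Htbeta; lra.
have Hgrow := Mcost_increment_le phi phi_ge0 pit _ _ (ltW Hbetat).
have := cost_before beta; rewrite lexx (ltW Hab) => /(_ isT) Hbeta.
have : phimax phi * (t - beta) <= phimax phi * delta.
  by rewrite ler_wpM2l ?phimax_ge0 //; lra.
lra.
Qed.
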